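(* Let $G$ be a connected graph and let $H$ be a graph (not necessarily connected) that is not complete. Then $$\dim_{n\ell}(G\odot H)=n(G)\cdot \dim_{n\ell}(H+K_1).$$
   Context: Graphs are finite and simple; $d(u,v)$ is the shortest-path distance and $n(G)$ the number of vertices. A set $X\subseteq V(G)$ resolves two vertices $u,v$ if some $x\in X$ satisfies $d(u,x)\neq d(v,x)$. $X$ is a nonlocal resolving set of a connected graph if it resolves every pair of distinct non-adjacent vertices; the nonlocal metric dimension $\dim_{n\ell}$ is the minimum size of a nonlocal resolving set. The join $G+H$ is obtained from disjoint copies of $G$ and $H$ by adding all edges between them. For $V(G)=\{g_1,\dots,g_{n(G)}\}$, the corona product $G\odot H$ is obtained from the disjoint union of $G$ and $n(G)$ copies $H_1,\dots,H_{n(G)}$ of $H$ by joining $g_i$ to every vertex of $H_i$ for each $i$. *)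

From mathcomp Require Import all_boot.
Set Implicit Arguments. Unset Strict Implicit. Unset Printing Implicit Defensive.

Section Graphs.
Variable T : finType.
Implicit Types (e : rel T).

Definition simple_graph e := symmetric e /\ irreflexive e.

Definition connected_graph e := forall u v : T, connect e u v.

Definition complete_graph e := forall u v : T, u != v -> e u v.

Fixpoint reach e (n : nat) (u v : T) : bool :=
  match n with
  | 0 => u == v
  | n'.+1 => reach e n' u v || [exists w, reach e n' u w && e w v]
  end.

(* shortest-path distance; equals #|T| if v is not reachable from u
   (only used on connected graphs, where it is the usual distance) *)
Definition dist e (u v : T) : nat := find (fun n => reach e n u v) (iota 0 #|T|).

Definition nonlocal_resolvingb e (X : {set T}) : bool :=
  [forall u, forall v, (u != v) && ~~ e u v ==> [exists x in X, dist e u x != dist e v x]].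

Definition dim_nl e : nat :=
  \big[minn/#|T|]_(X : {set T} | nonlocal_resolvingb e X) #|X|.
End Graphs.

Definition join_rel (T1 T2 : finType) (eG : rel T1) (eH : rel T2) : rel (T1 + T2) :=
  fun x y => match x, y with
  | inl a, inl b => eG a b
  | inr a, inr b => eH a b
  | _, _ => true
  end.

Definition K1 : rel unit := fun _ _ => false.

(* corona G ⊙ H: vertices inl g (of G) and inr (g, h) (vertex h of the copy H_g) *)
Definition corona_rel (T1 T2 : finType) (eG : rel T1) (eH : rel T2)
  : rel (T1 + (T1 * T2)) :=
  fun x y => match x, y with
  | inl a, inl b => eG a b
  | inr (i, h), inr (j, k) => (i == j) && eH h k
  | inl a, inr (i, _) => a == i
  | inr (i, _), inl a => a == i
  end.

From mathcomp Require Import all_boot.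

(* In the corona G ⊙ H the vertex g_i is a gate of the copy H_i: every walk
   leaving H_i passes through g_i, which is adjacent to all of H_i. Hence a
   vertex outside H_i is equidistant from all vertices of H_i, while inside H_i
   the distances are those of the cone H + K1 (0, 1 or 2). So a nonlocal
   resolving set of G ⊙ H must, in each copy, contain a set of vertices of H
   resolving the non-adjacent pairs of H + K1, and such a set never needs the
   apex of the cone, which is at distance 1 from all of H. Conversely, such sets
   in all copies resolve everything else: they are nonempty since H is not
   complete, and a landmark in H_i is at distance 1 from g_i and at most 2 from
   H_i, but more than 1 from every other g_j and more than 2 from every other
   copy. *)
Set Implicit Arguments. Unset Strict Implicit. Unset Printing Implicit Defensive.

Section Walks.
Variables (T : finType) (e : rel T).

Lemma reach_leq m n u v : m <= n -> reach e m u v -> reach e n u v.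
Proof.
move=> /subnKC <-; elim: (n - m) => [|k IHk]; first by rewrite addn0.
by move=> r; rewrite addnS /= IHk.
Qed.

Lemma reach_refl n u : reach e n u u.
Proof. by apply: (@reach_leq 0) => /=. Qed.

Lemma reach1 u v : reach e 1 u v = (u == v) || e u v.
Proof.
rewrite /=; congr orb; apply/existsP/idP => [[w /andP[/eqP -> //]]|uv].
by exists u; rewrite eqxx.
Qed.

Lemma reachD m n u v :
  reach e (m + n) u v = [exists w, reach e m u w && reach e n w v].
Proof.
elim: n v => [|n IHn] v.
  rewrite addn0; apply/idP/existsP => [r|[w /andP[r /eqP <-]]] //.
  by exists v; rewrite r /=.
rewrite addnS /= IHn; apply/idP/existsP.
- case/orP => [/existsP[w /andP[r1 r2]]|/existsP[x /andP[]]].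
    by exists w; rewrite r1 r2.
  rewrite IHn => /existsP[w /andP[r1 r2]] ex.
  by exists w; rewrite r1 /=; apply/orP; right; apply/existsP; exists x; rewrite r2.
- case=> w /andP[r1 /orP[r2|/existsP[x /andP[r2 ex]]]].
    by apply/orP; left; apply/existsP; exists w; rewrite r1.
  apply/orP; right; apply/existsP; exists x; rewrite ex andbT IHn.
  by apply/existsP; exists w; rewrite r1.
Qed.

Lemma reach1S n u v :
  reach e n.+1 u v = [exists w, ((u == w) || e u w) && reach e n w v].
Proof.
rewrite -add1n reachD; apply: eq_existsb => w; by rewrite reach1.
Qed.

Variables (S : {pred T}) (c : T).
Hypothesis gate_adj : forall y, y \in S -> e y c.
Hypothesis gate_only : forall y z, y \in S -> z \notin S -> e y z -> z = c.

Lemma reach_gate n u x : u \in S -> x \notin S -> reach e n.+1 u x = reach e n c x.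
Proof.
move=> uS xS; elim: n u uS => [|n IHn] u uS.
  rewrite reach1 /=; have -> : (u == x) = false by apply: contraNF xS => /eqP <-.
  apply/idP/eqP => [/(gate_only uS xS) ->|<-] //; exact: gate_adj.
rewrite reach1S; apply/existsP/idP => [[w /andP[uw r]]|r].
  have [wS|wS] := boolP (w \in S); first by rewrite (IHn _ wS) in r; rewrite /= r.
  have uw' : e u w by case/orP: uw => // /eqP uw; rewrite -uw uS in wS.
  by rewrite -(gate_only uS wS uw').
by exists c; rewrite gate_adj ?orbT.
Qed.
End Walks.

Section Distance.
Variables (T : finType) (e : rel T).

Lemma dist_leqE n u v : n < #|T| -> (dist e u v <= n) = reach e n u v.
Proof.
move=> n_lt; rewrite /dist; apply/idP/idP => [le_n|r].
  have : has (fun m => reach e m u v) (iota 0 #|T|).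
    by rewrite has_find size_iota (leq_ltn_trans le_n).
  move=> /(nth_find 0); rewrite nth_iota ?add0n; first exact: reach_leq.
  by rewrite (leq_ltn_trans le_n).
rewrite leqNgt; apply/negP => lt_n.
by have := before_find 0 lt_n; rewrite nth_iota // add0n r.
Qed.

Lemma dist_gt n u v : n < #|T| -> ~~ reach e n u v -> n < dist e u v.
Proof. by move=> n_lt r; rewrite ltnNge dist_leqE. Qed.

Lemma dist_eq_reach u v x :
  (forall n, reach e n u x = reach e n v x) -> dist e u x = dist e v x.
Proof. by move=> r; apply: eq_find => n; exact: r. Qed.

Lemma dist_refl u : dist e u u = 0.
Proof. by apply/eqP; rewrite -leqn0 dist_leqE ?reach_refl //; apply/card_gt0P; exists u. Qed.

Lemma dist_neq0 u v : u != v -> dist e u v != 0.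
Proof.
by move=> uv; rewrite -lt0n ltnNge dist_leqE /= ?uv //; apply/card_gt0P; exists u.
Qed.

Lemma dist_adj u v : u != v -> e u v -> dist e u v = 1.
Proof.
move=> uv uev; apply/eqP; rewrite eqn_leq lt0n dist_neq0 // andbT.
rewrite dist_leqE ?reach1 ?uev ?orbT //.
by apply/card_gt1P; exists u, v.
Qed.

Lemma dist_common_nbr u w v : u != v -> ~~ e u v -> e u w -> e w v -> dist e u v = 2.
Proof.
move=> uv nuv uw wv.
have n3 : 2 < #|T|.
  apply/card_gt2P; exists u, w, v; split=> //; split=> //.
  - by apply: contraNneq nuv => ->.
  - by apply: contraNneq nuv => <-.
  - by rewrite eq_sym.
apply/eqP; rewrite eqn_leq dist_leqE // ltnNge dist_leqE ?reach1 ?negb_or ?uv ?nuv //;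
  last exact: ltnW.
by rewrite -(add1n 1) reachD !andbT; apply/existsP; exists w; rewrite !reach1 uw wv !orbT.
Qed.
End Distance.

Section NonlocalDimension.
Variables (T : finType) (e : rel T).

Lemma nonlocal_resolvingT : nonlocal_resolvingb e [set: T].
Proof.
apply/'forall_forallP => u v; apply/implyP => /andP[uv _].
by apply/existsP; exists u; rewrite in_setT dist_refl eq_sym dist_neq0 // eq_sym.
Qed.

Lemma dim_nl_min X : nonlocal_resolvingb e X -> dim_nl e <= #|X|.
Proof.
move=> resX; rewrite /dim_nl; have : X \in index_enum {set T} by rewrite mem_index_enum.
elim: (index_enum _) => [//|Y r IHr]; rewrite inE big_cons.
case/orP => [/eqP <-|/IHr le_r]; first by rewrite resX geq_minl.
by case: ifP => // _; rewrite geq_min le_r orbT.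
Qed.

Lemma dim_nl_attained : exists2 X, nonlocal_resolvingb e X & #|X| = dim_nl e.
Proof.
pose attained (r : nat) := (r == #|T|) || [exists X, nonlocal_resolvingb e X && (#|X| == r)].
have : attained (dim_nl e).
  apply: (big_ind attained) => [|x y ax ay|X resX].
  - by rewrite /attained eqxx.
  - by rewrite /minn; case: ifP.
  - by apply/orP; right; apply/existsP; exists X; rewrite resX eqxx.
case/orP => [/eqP ->|/existsP[X /andP[resX /eqP cardX]]]; last by exists X.
by exists [set: T]; rewrite ?cardsT // nonlocal_resolvingT.
Qed.

Lemma dim_nl_ge k : (forall X, nonlocal_resolvingb e X -> k <= #|X|) -> k <= dim_nl e.
Proof. by move=> ge_k; have [X resX <-] := dim_nl_attained; exact: ge_k. Qed.
End NonlocalDimension.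

Lemma leq_card_preimset (aT rT : finType) (f : aT -> rT) (A : {set rT}) :
  injective f -> #|f @^-1: A| <= #|A|.
Proof.
move=> f_inj; rewrite -(card_imset _ f_inj); apply/subset_leq_card/subsetP.
by move=> y /imsetP[x]; rewrite inE => Ax ->.
Qed.

Lemma card_fibers (A B : finType) (P : {set A * B}) :
  #|P| = \sum_a #|pair a @^-1: P|.
Proof.
transitivity (\sum_a \sum_(b | (a, b) \in P) 1).
  by rewrite -sum1_card pair_big_dep; apply: eq_bigl => -[a b].
by apply: eq_bigr => a _; rewrite -sum1_card; apply: eq_bigl => b; rewrite inE.
Qed.

Section Cone.
Variables (T : finType) (eH : rel T).
Local Notation J := (join_rel eH K1).

Definition cone_dist (h k : T) : nat := if h == k then 0 else if eH h k then 1 else 2.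

Definition cone_resolvingb (Y : {set T}) : bool :=
  [forall h, forall k, (h != k) && ~~ eH h k ==>
     [exists y in Y, cone_dist h y != cone_dist k y]].

Lemma cone_dist_le2 h k : cone_dist h k <= 2.
Proof. by rewrite /cone_dist; case: ifP => //; case: ifP. Qed.

Lemma cone_resolving_neq0 Y : ~ complete_graph eH -> cone_resolvingb Y -> Y != set0.
Proof.
move=> ncompH resY; apply/negP => /eqP Y0; apply: ncompH => h k hk.
apply/negPn/negP => nhk; move/'forall_forallP/(_ h k): resY.
by rewrite hk nhk Y0 => /existsP[y]; rewrite inE.
Qed.

Lemma join_K1_dist_inl h k : dist J (inl h) (inl k) = cone_dist h k.
Proof.
rewrite /cone_dist; have [-> | hk] := eqVneq h k; first exact: dist_refl.
have hk' : inl h != inl k :> T + unit by [].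
case: ifP => ehk; first exact: dist_adj.
by apply: (@dist_common_nbr _ _ _ (inr tt)) => //=; rewrite ehk.
Qed.

Lemma join_K1_dist_apex h : dist J (inl h) (inr tt) = 1.
Proof. exact: dist_adj. Qed.

Lemma cone_resolving_join X : nonlocal_resolvingb J X -> cone_resolvingb (inl @^-1: X).
Proof.
move=> resX; apply/'forall_forallP => h k; apply/implyP => /andP[hk nhk].
have hk' : inl h != inl k :> T + unit by [].
move/'forall_forallP/(_ (inl h) (inl k)): resX; rewrite hk' nhk.
case/existsP => -[y|[]] /andP[Xy]; rewrite ?join_K1_dist_apex ?eqxx //.
by rewrite !join_K1_dist_inl => ne; apply/existsP; exists y; rewrite inE Xy.
Qed.

Lemma join_resolving_cone Y : cone_resolvingb Y -> nonlocal_resolvingb J (inl @: Y).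
Proof.
move=> resY; apply/'forall_forallP => -[h|[]] [k|[]] //=; apply/implyP => /andP[hk nhk].
have hk' : h != k by [].
move/'forall_forallP/(_ h k): resY; rewrite hk' nhk => /existsP[y /andP[Yy ne]].
by apply/existsP; exists (inl y); rewrite imset_f // !join_K1_dist_inl.
Qed.
End Cone.

Section Corona.
Variables (T1 T2 : finType) (eG : rel T1) (eH : rel T2).
Local Notation V := (T1 + T1 * T2)%type.
Local Notation C := (corona_rel eG eH).

Definition in_copy (i : T1) : {pred V} :=
  fun x => if x is inr p then p.1 == i else false.

Lemma corona_reach_gate i n u x :
  u \in in_copy i -> x \notin in_copy i -> reach C n.+1 u x = reach C n (inl i) x.
Proof.
apply: reach_gate => [[//|[j k]] /eqP /= -> |]; first by rewrite eqxx.
move=> [//|[j k]] [a|[j' k']] /eqP /= ->; first by move=> _ /eqP ->.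
by rewrite -topredE /= eq_sym => /negPf ->.
Qed.

Lemma corona_dist_copy i h k : dist C (inr (i, h)) (inr (i, k)) = cone_dist eH h k.
Proof.
rewrite /cone_dist; have [-> | hk] := eqVneq h k; first exact: dist_refl.
have hk' : inr (i, h) != inr (i, k) :> V by apply: contraNneq hk => -[->].
case: ifP => ehk; first by apply: dist_adj; rewrite /= ?eqxx.
by apply: (@dist_common_nbr _ _ _ (inl i)); rewrite //= ?eqxx ?ehk.
Qed.

Lemma corona_dist_apex i h : dist C (inl i) (inr (i, h)) = 1.
Proof. by apply: dist_adj; rewrite /= ?eqxx. Qed.

Lemma corona_dist_outside i h k x :
  x \notin in_copy i -> dist C (inr (i, h)) x = dist C (inr (i, k)) x.
Proof.
move=> xi; apply: dist_eq_reach => -[|n].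
  case: x xi => [//|[j k']]; rewrite unfold_in /= !(inj_eq inr_inj) !xpair_eqE.
  by rewrite eq_sym => /negPf ->.
by rewrite !(corona_reach_gate (i := i)) // unfold_in /= eqxx.
Qed.

Lemma corona_dist_far_copy i j h k : i != j -> 2 < dist C (inr (i, h)) (inr (j, k)).
Proof.
move=> ij; apply: dist_gt.
  apply/card_gt2P; exists (inr (i, h)), (inl i), (inl j).
  by split=> //; split=> //; rewrite /= eq_sym.
by rewrite (corona_reach_gate (i := i)) ?reach1 ?unfold_in //= ?eqxx // eq_sym.
Qed.

Lemma corona_dist_far_apex a i h : a != i -> 1 < dist C (inl a) (inr (i, h)).
Proof.
move=> ai; apply: dist_gt; last by rewrite reach1 /= (negPf ai).
by apply/card_gt1P; exists (inl a), (inr (i, h)).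
Qed.

Lemma cone_resolving_copy W i :
  nonlocal_resolvingb C W -> cone_resolvingb eH (pair i @^-1: (inr @^-1: W)).
Proof.
move=> resW; apply/'forall_forallP => h k; apply/implyP => /andP[hk nhk].
have hk' : inr (i, h) != inr (i, k) :> V by apply: contraNneq hk => -[->].
move/'forall_forallP/(_ (inr (i, h)) (inr (i, k))): resW.
rewrite hk' /= eqxx nhk => /existsP[x /andP[Wx]].
have [xi|xi] := boolP (x \in in_copy i); last by rewrite (corona_dist_outside h k xi) eqxx.
case: x xi Wx => [//|[j y]] /eqP /= -> Wy.
by rewrite !corona_dist_copy => ne; apply/existsP; exists y; rewrite !inE Wy.
Qed.

Lemma corona_resolving_copies Y :
  cone_resolvingb eH Y -> Y != set0 -> nonlocal_resolvingb C (inr @: setX [set: T1] Y).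
Proof.
move=> resY /set0Pn[y0 Yy0].
have landmark a : inr (a, y0) \in (inr @: setX [set: T1] Y : {set V}).
  by rewrite imset_f // in_setX /= Yy0 andbT.
apply/'forall_forallP => -[a|[i h]] [b|[j k]]; apply/implyP => /andP[uv nuv] /=.
- apply/existsP; exists (inr (a, y0)); rewrite landmark corona_dist_apex ltn_eqF //.
  by apply: corona_dist_far_apex; rewrite eq_sym.
- apply/existsP; exists (inr (a, y0)); rewrite landmark corona_dist_apex ltn_eqF //.
  by apply: (ltn_trans _ (corona_dist_far_copy _ _ _)); rewrite // eq_sym.
- apply/existsP; exists (inr (b, y0)); rewrite landmark corona_dist_apex gtn_eqF //.
  by apply: (ltn_trans _ (corona_dist_far_copy _ _ _)); rewrite // eq_sym.
have [eij|ij] := eqVneq i j.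
  subst j; have hk : h != k by apply: contraNneq uv => ->.
  move/'forall_forallP/(_ h k): resY; move: nuv; rewrite /= eqxx hk => ->.
  case/existsP => y /andP[Yy ne].
  by apply/existsP; exists (inr (i, y)); rewrite !corona_dist_copy imset_f // in_setX in_setT Yy.
apply/existsP; exists (inr (i, y0)); rewrite landmark corona_dist_copy ltn_eqF //.
by apply: (leq_ltn_trans (cone_dist_le2 _ _ _)); apply: corona_dist_far_copy; rewrite eq_sym.
Qed.
End Corona.

Theorem theorem3p2 (T1 T2 : finType) (eG : rel T1) (eH : rel T2) :
  simple_graph eG -> connected_graph eG ->
  simple_graph eH -> ~ complete_graph eH ->
  dim_nl (corona_rel eG eH) = #|T1| * dim_nl (join_rel eH K1).
Proof.
move=> _ _ _ ncompH.
have [X resX cardX] := dim_nl_attained (join_rel eH K1).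
have resY := cone_resolving_join resX.
have cardY : #|inl @^-1: X| <= dim_nl (join_rel eH K1).
  by rewrite -cardX leq_card_preimset //; exact: inl_inj.
apply/eqP; rewrite eqn_leq; apply/andP; split.
  have resC := corona_resolving_copies eG resY (cone_resolving_neq0 ncompH resY).
  apply: leq_trans (dim_nl_min resC) _.
  by rewrite card_imset ?cardsX ?cardsT ?leq_mul //; exact: inr_inj.
apply: dim_nl_ge => W resW.
have cardW : #|inr @^-1: W| <= #|W| by apply: leq_card_preimset; exact: inr_inj.
apply: leq_trans cardW; rewrite card_fibers -sum_nat_const; apply: leq_sum => i _.
have := dim_nl_min (join_resolving_cone (cone_resolving_copy i resW)).
by rewrite card_imset //; exact: inl_inj.
Qed.
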